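(* Let $G$ be a countable group, and let $X$ be a proper metric space equipped with a $G$-action by isometries. If the $G$-action on $X$ is proper and properly proximal, then $G$ is properly proximal.
   Context: A sequence $(g_n)$ in $G$ escapes every compact subspace of $X$ if for some (equivalently any) $x\in X$, $(g_nx)$ eventually leaves every compact subset. The $G$-action on $X$ is properly proximal if there exist finitely many compact metrizable $G$-spaces $K_1,\dots,K_\ell$, none carrying a $G$-invariant probability measure, and diffuse (atomless) probability measures $\eta_i$ on $K_i$, such that for every sequence $(g_n)$ escaping every compact subspace of $X$, there exist $i$ and a subsequence $(g_{\sigma(n)})$ with $g_{\sigma(n)}h\eta_i-g_{\sigma(n)}\eta_i\to0$ weak-$*$ for every $h\in G$. A countable group $G$ is properly proximal if there exist finitely many compact $G$-spaces $K_1,\dots,K_\ell$ and diffuse probability measures $\eta_i$ on $K_i$ such that no $K_i$ carries a $G$-invariant probability measure, and for every nonprincipal ultrafilter $\omega$ on $G$ there exists $i$ such that for every $h\in G$, $\lim_{g\to\omega}((gh)\eta_i-g\eta_i)=0$ weak-$*$. *)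

From HB Require Import structures.
From mathcomp Require Import all_boot all_order all_algebra.
From mathcomp Require Import all_classical all_reals all_analysis.
Set Implicit Arguments. Unset Strict Implicit. Unset Printing Implicit Defensive.
Import Order.TTheory GRing.Theory Num.Theory.
Import numFieldNormedType.Exports.
Local Open Scope classical_set_scope.
Local Open Scope ring_scope.

Record cgroup := CGroup {
  gcar :> Type;
  gmul : gcar -> gcar -> gcar;
  gone : gcar;
  ginv : gcar -> gcar;
  gmulA : forall x y z, gmul x (gmul y z) = gmul (gmul x y) z;
  gmul1g : forall x, gmul gone x = x;
  gmulVg : forall x, gmul (ginv x) x = gone;
  gcountable : exists f : gcar -> nat, injective f }.

Definition is_action (G : cgroup) (T : Type) (a : G -> T -> T) :=
  (forall x, a (gone G) x = x) /\ (forall g h x, a (gmul g h) x = a g (a h x)).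

(* a compact (Hausdorff) G-space; G discrete, so continuity = each g acts continuously *)
Record cGspace (G : cgroup) := CGspace {
  csp : ptopologicalType;
  cact : G -> csp -> csp;
  cact_action : is_action cact;
  cact_cont : forall g, continuous (cact g);
  csp_compact : compact [set: csp];
  csp_hausdorff : hausdorff_space csp }.

Record cmGspace (R : realType) (G : cgroup) := CMGspace {
  msp : pseudoPMetricType R;
  mact : G -> msp -> msp;
  mact_action : is_action mact;
  mact_cont : forall g, continuous (mact g);
  msp_compact : compact [set: msp];
  msp_hausdorff : hausdorff_space msp }.

Definition cm_to_c (R : realType) (G : cgroup) (K : cmGspace R G) : cGspace G :=
  @CGspace G (msp K) (@mact R G K) (@mact_action R G K) (@mact_cont R G K)
    (@msp_compact R G K) (@msp_hausdorff R G K).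

Definition borel (T : ptopologicalType) := g_sigma_algebraType (@open T).

(* probability measures on a compact Hausdorff space: Radon (inner regular by
   compact sets) Borel probability measures *)
Definition radon (R : realType) (T : ptopologicalType)
  (mu : probability (borel T) R) :=
  forall A : set (borel T), measurable A ->
    mu A = ereal_sup [set mu C | C in [set C : set T | compact C /\ C `<=` A]].

Definition diffuse (R : realType) (T : ptopologicalType)
  (mu : probability (borel T) R) := forall x : T, mu [set x] = 0%E.

Definition has_invariant_prob (R : realType) (G : cgroup) (K : cGspace G) :=
  exists mu : probability (borel (csp K)) R, radon mu /\
    forall (g : G) (A : set (borel (csp K))), measurable A ->
      mu (@cact _ K g @^-1` A) = mu A.

(* integral of f against the translated measure g.mu, i.e.
   \int f d(g mu) = \int f(g x) dmu(x) *)
Definition gint (R : realType) (G : cgroup) (K : cGspace G)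
  (mu : probability (borel (csp K)) R) (g : G) (f : csp K -> R) : R :=
  Rintegral mu setT (fun x => f (@cact _ K g x)).

(* X is a metric space: its pseudometric structure is induced by a metric d *)
Definition is_metric (R : realType) (X : pseudoPMetricType R) (d : X -> X -> R) :=
  (forall x y, 0 <= d x y) /\ (forall x y, d x y = 0 -> x = y) /\
  (forall x y, d x y = d y x) /\ (forall x y z, d x z <= d x y + d y z) /\
  (forall x (e : R) y, ball x e y <-> d x y < e).

Definition proper_metric (R : realType) (X : pseudoPMetricType R) (d : X -> X -> R) :=
  forall (x : X) (r : R), compact [set y | d x y <= r].

Definition isometric_action (R : realType) (G : cgroup) (X : pseudoPMetricType R)
  (d : X -> X -> R) (act : G -> X -> X) :=
  forall g x y, d (act g x) (act g y) = d x y.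

Definition proper_action (G : cgroup) (X : ptopologicalType) (act : G -> X -> X) :=
  forall C : set X, compact C ->
    finite_set [set g : G | exists x, C x /\ C (act g x)].

Definition escapes (G : cgroup) (X : ptopologicalType) (act : G -> X -> X)
  (gs : nat -> G) :=
  exists x : X, forall C : set X, compact C ->
    \forall n \near \oo, ~ C (act (gs n) x).

Definition properly_proximal_action (R : realType) (G : cgroup)
  (X : ptopologicalType) (act : G -> X -> X) :=
  exists (l : nat) (K : 'I_l -> cmGspace R G)
         (eta : forall i, probability (borel (msp (K i))) R),
    (forall i, ~ has_invariant_prob R (cm_to_c (K i))) /\
    (forall i, radon (eta i)) /\
    (forall i, diffuse (eta i)) /\
    forall gs : nat -> G, escapes act gs ->
      exists (i : 'I_l) (s : nat -> nat), (forall n, (s n < s n.+1)%N) /\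
        forall (h : G) (f : msp (K i) -> R), continuous f ->
          (fun n => gint (K := cm_to_c (K i)) (eta i) (gmul (gs (s n)) h) f
                    - gint (K := cm_to_c (K i)) (eta i) (gs (s n)) f)
            @ \oo --> (0 : R).

Definition nonprincipal_ultrafilter (G : cgroup) (w : set_system G) :=
  w setT /\ ~ w set0 /\
  (forall A B, w A -> w B -> w (A `&` B)) /\
  (forall A B, A `<=` B -> w A -> w B) /\
  (forall A, w A \/ w (~` A)) /\
  (forall g : G, ~ w [set g]).

Definition properly_proximal_group (R : realType) (G : cgroup) :=
  exists (l : nat) (K : 'I_l -> cGspace G)
         (eta : forall i, probability (borel (csp (K i))) R),
    (forall i, ~ has_invariant_prob R (K i)) /\
    (forall i, radon (eta i)) /\
    (forall i, diffuse (eta i)) /\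
    forall w : set_system G, nonprincipal_ultrafilter w ->
      exists i : 'I_l,
        forall (h : G) (f : csp (K i) -> R), continuous f ->
          (fun g : G => gint (eta i) (gmul g h) f - gint (eta i) g f)
            @ w --> (0 : R).

(* Suppose no eta_i is asymptotically invariant along the nonprincipal
   ultrafilter w.  Then each failure is witnessed uniformly on some B_i in w,
   and the intersection B of the B_i is again in w, hence infinite.  Since the
   action is proper, only finitely many g move a base point x0 by at most n,
   so B contains a sequence (g_n) with d(x0, g_n x0) > n, which escapes every
   compact set.  Proper proximality of the action makes some eta_i
   asymptotically invariant along a subsequence of (g_n), contradicting the
   choice of B_i. *)

From HB Require Import structures.
From mathcomp Require Import all_boot all_order all_algebra.
From mathcomp Require Import all_classical all_reals all_analysis.
Import Order.TTheory GRing.Theory Num.Theory.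
Import numFieldNormedType.Exports.
Local Open Scope classical_set_scope.
Local Open Scope ring_scope.

Section MetricBalls.
Context {R : realType} {X : pseudoPMetricType R} {d : X -> X -> R}.
Hypothesis hd : is_metric d.

Lemma metric_dxx x : d x x = 0.
Proof.
have [d_ge0 [_ [_ [_ ballE]]]] := hd.
apply/eqP; rewrite eq_le d_ge0 andbT leNgt; apply/negP => dxx_gt0.
by have := (ballE x (d x x) x).1 (ballxx x dxx_gt0); rewrite ltxx.
Qed.

Lemma open_metric_ball x r : open [set y | d x y < r].
Proof.
have [_ [_ [_ [d_triangle ballE]]]] := hd.
rewrite openE => y /= dxy_lt; apply/nbhs_ballP.
exists (r - d x y) => [|z /ballE dyz_lt /=]; first by rewrite /= subr_gt0.
by apply: le_lt_trans (d_triangle x y z) _; rewrite -ltrBrDl.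
Qed.

Lemma compact_metric_bounded x (C : set X) : compact C ->
  exists M, forall y, C y -> d x y <= M.
Proof.
rewrite compact_cover => /(_ nat setT (fun n => [set y | d x y < n%:R])) [].
- by move=> n _; apply: open_metric_ball.
- by move=> y _; exists (Num.truncn (d x y)).+1 => //=; apply: truncnS_gt.
move=> D _ C_covered; exists (\max_(n <- finmap.enum_fset D) n)%:R.
move=> y /C_covered [n /= nD dxy_lt]; apply/ltW/(lt_le_trans dxy_lt).
by rewrite ler_nat; apply: (@leq_bigmax_seq _ _ xpredT id).
Qed.

End MetricBalls.

Lemma filter_finite_bigcap {T : Type} {F : set_system T} {A : set T}
    (f : T -> set T) : Filter F -> finite_set A ->
  (forall x, A x -> F (f x)) -> F (\bigcap_(x in A) f x).
Proof.
move=> FF finA Ff.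
have := @filter_bigI T {classic T} (fset_set (A : set {classic T})) f F FF.
by rewrite fset_setK //; apply=> x; rewrite in_fset_set // inE; apply: Ff.
Qed.

Lemma ultra_finite_set1 {T : Type} {F : set_system T} {A : set T} :
  UltraFilter F -> finite_set A -> F A -> exists2 x, A x & F [set x].
Proof.
move=> FU finA FA; apply: contrapT => /forall2NP nonprincipal.
have FAC : F (~` A).
  apply: filterS (filter_finite_bigcap (fun x => ~` [set x]) _ finA _).
    by move=> y cap Ay; apply: (cap y Ay).
  move=> x Ax; have [//|nF1] := nonprincipal x.
  by case: (in_ultra_setVsetC [set x] FU).
by apply: (filter_not_empty F); rewrite -(setICr A); apply: filterI.
Qed.

Section NonprincipalUltrafilter.
Context {G : cgroup} {w : set_system G}.
Hypothesis w_npu : nonprincipal_ultrafilter w.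

Lemma nonprincipal_ultrafilter_ultra : UltraFilter w.
Proof.
have [wT [w_neq0 [wI [wS [wVC _]]]]] := w_npu.
have w_proper : ProperFilter w by split => //; split.
split=> // F F_proper wF; rewrite eqEsubset; split=> // A FA.
have [//|/wF FAC] := wVC A.
by case: (filter_not_empty F); rewrite -(setICr A); apply: filterI.
Qed.

Lemma nonprincipal_ultrafilter_infinite {A : set G} : w A -> infinite_set A.
Proof.
move=> wA finA; have [_ [_ [_ [_ [_ w_nonprincipal]]]]] := w_npu.
have [g _] := ultra_finite_set1 nonprincipal_ultrafilter_ultra finA wA.
exact: w_nonprincipal.
Qed.

End NonprincipalUltrafilter.

Lemma ultra_not_cvg {T : Type} {U : topologicalType} {F : set_system T}
    {u : T -> U} {l : U} : UltraFilter F -> ~ (u @ F --> l) ->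
  exists2 A, nbhs l A & F (u @^-1` ~` A).
Proof.
move=> FU /existsNP [A /not_implyP [lA not_FA]]; exists A => //.
by have [|] := in_ultra_setVsetC (u @^-1` A) FU.
Qed.

Section EscapingSequences.
Context {R : realType} {G : cgroup} {X : pseudoPMetricType R}.
Context {d : X -> X -> R} {act : G -> X -> X}.
Hypotheses (hd : is_metric d) (d_proper : proper_metric d).
Hypothesis act_proper : proper_action act.

Lemma proper_action_finite_displacement x r :
  finite_set [set g | d x (act g x) <= r].
Proof.
apply: sub_finite_set (act_proper _ (d_proper x r)) => g dxgx_le.
exists x; split=> //=; rewrite (metric_dxx hd).
by apply: le_trans dxgx_le; case: hd.
Qed.

Lemma infinite_set_escaping_seq {B : set G} : infinite_set B ->
  exists2 gs : nat -> G, (forall n, B (gs n)) & escapes act gs.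
Proof.
pose x0 : X := point.
move=> infB; have far n : exists g, B g /\ n%:R < d x0 (act g x0).
  have [g [Bg /negP]] := infinite_setN0
    (infinite_setD infB (proper_action_finite_displacement x0 n%:R)).
  by rewrite -ltNge => far_g; exists g.
have [gs gs_far] := choice far; exists gs => [n|]; first by case: (gs_far n).
exists x0 => C /(compact_metric_bounded hd x0) [M C_bounded].
near=> n => /C_bounded; apply/negP; rewrite -ltNge.
apply: le_lt_trans (gs_far n).2; near: n; exact: nbhs_infty_ger.
Unshelve. all: end_near.
Qed.

End EscapingSequences.

Definition asymp_invariant {R : realType} {G : cgroup} {K : cGspace G}
    (mu : probability (borel (csp K)) R) {I : Type} (F : set_system I)
    (g : I -> G) :=
  forall (h : G) (f : csp K -> R), continuous f ->
    (fun t => gint mu (gmul (g t) h) f - gint mu (g t) f) @ F --> (0 : R).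

Lemma ultra_not_asymp_invariant {R : realType} {G : cgroup} {K : cGspace G}
    {mu : probability (borel (csp K)) R} {w : set_system G} :
  UltraFilter w -> ~ asymp_invariant mu w id ->
  exists2 B, w B & forall gs : nat -> G, (forall n, B (gs n)) ->
    ~ asymp_invariant mu \oo gs.
Proof.
move=> wU /existsNP [h /existsNP [f /not_implyP [f_cont not_cvg]]].
have [A A0 wA] := ultra_not_cvg wU not_cvg.
apply: ex_intro2 wA _ => gs gsB /(_ h f f_cont A A0) gsA.
have [n An] := @filter_ex _ (\oo : set_system nat) _ _ gsA.
exact: gsB n An.
Qed.

Theorem lemma1p3 (R : realType) (G : cgroup) (X : pseudoPMetricType R)
  (d : X -> X -> R) (act : G -> X -> X) :
  is_metric d -> proper_metric d ->
  is_action act -> isometric_action d act ->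
  proper_action act -> properly_proximal_action R act ->
  properly_proximal_group R G.
Proof.
move=> hd d_proper _ _ act_proper.
move=> [l [K [eta [K_noninv [eta_radon [eta_diffuse K_prox]]]]]].
exists l, (fun i => cm_to_c (K i)), eta; do 3!split => //.
move=> w w_npu; have wU := nonprincipal_ultrafilter_ultra w_npu.
apply: contrapT => /forallNP not_inv.
have /choice [B B_far] : forall i, exists B : set G, w B /\
    forall gs, (forall n, B (gs n)) ->
      ~ asymp_invariant (K := cm_to_c (K i)) (eta i) \oo gs.
  by move=> i; have [B wB B_far] := ultra_not_asymp_invariant wU (not_inv i); exists B.
have wBall : w [set g | forall i, B i g].
  by apply: filter_forall => i; case: (B_far i).
have [gs gsB gs_esc] := infinite_set_escaping_seq hd d_proper act_proper
  (nonprincipal_ultrafilter_infinite w_npu wBall).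
have [i [s [_ gs_inv]]] := K_prox gs gs_esc.
exact: (B_far i).2 (gs \o s) (fun n => gsB (s n) i) gs_inv.
Qed.
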